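(* Let $n\ge 3$ and consider the regular-polygon generalized probabilistic theory with state space $\Omega_n$ and effect set $\mathcal{E}_n$ (defined in the context). If $n$ is odd with $n\ge 5$, or $n$ is even with $n\ge 6$, then this theory does not satisfy Information Symmetry. That is, there exist two pure states $\omega,\omega'\in\Omega_n$ such that every minimum-error measurement $\{e,u-e\}$ for discriminating $\omega$ and $\omega'$ in which $e$ is an extremal point of $\mathcal{E}_n$ has $p(e\mid\omega')\neq p(u-e\mid\omega)$.
   Context: **Regular polygon model.** Fix $n\ge3$ and set $r_n=\sqrt{\sec(\pi/n)}$. - **Pure states.** These are $\omega_i=\big(r_n\cos\tfrac{2\pi i}{n},\,r_n\sin\tfrac{2\pi i}{n},\,1\big)^T\in\mathbb{R}^3$ for $i=0,\dots,n-1$. The state space $\Omega_n$ is their convex hull. - **Unit effect.** $u=(0,0,1)^T$. - **Extremal effects, even $n$.** $e_i=\tfrac12\big(r_n\cos\tfrac{(2i-1)\pi}{n},\,r_n\sin\tfrac{(2i-1)\pi}{n},\,1\big)^T$. - **Extremal effects, odd $n$.** $e_i=\tfrac{1}{1+r_n^2}\big(r_n\cos\tfrac{2\pi i}{n},\,r_n\sin\tfrac{2\pi i}{n},\,1\big)^T$. - **Complements.** $\bar e_i=u-e_i$. - **Effect set.** $\mathcal{E}_n$ is the convex hull of $0$, $u$ and $\{e_i,\bar e_i\}_{i=0}^{n-1}$. - **Probabilities.** The probability that effect $e$ clicks on state $\omega$ is $p(e\mid\omega)=e\cdot\omega$, the Euclidean inner product. - **Measurements.** A two-outcome measurement is a pair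 $\{e,u-e\}$ with $e\in\mathcal{E}_n$. **Binary discrimination with uniform prior.** One of two states $\omega_1,\omega_2$ is prepared, each with probability $1/2$. One performs $\{e_1,e_2\}$ with $e_1+e_2=u$ and guesses $\omega_i$ when $e_i$ clicks. - The two error probabilities are $p_{12}=p(e_1\mid\omega_2)$ and $p_{21}=p(e_2\mid\omega_1)$. - The total error is $p_E=\tfrac12(p_{12}+p_{21})$. - A minimum-error measurement is one minimizing $p_E$ over all allowed two-outcome measurements. **Information Symmetry (IS).** A theory satisfies IS if, for every pair of distinct pure states, there is a minimum-error measurement $\{e,u-e\}$ with $e$ an extremal point of the effect set such that $p_{12}=p_{21}$. *)

From Stdlib Require Import Reals Lra Lia List Arith.
Import ListNotations.
Open Scope R_scope.

Record vec3 := mkV { vx : R; vy : R; vz : R }.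

Definition vzero : vec3 := mkV 0 0 0.
Definition vadd (a b : vec3) : vec3 := mkV (vx a + vx b) (vy a + vy b) (vz a + vz b).
Definition vsub (a b : vec3) : vec3 := mkV (vx a - vx b) (vy a - vy b) (vz a - vz b).
Definition vscale (t : R) (a : vec3) : vec3 := mkV (t * vx a) (t * vy a) (t * vz a).
Definition dot (a b : vec3) : R := vx a * vx b + vy a * vy b + vz a * vz b.

Fixpoint rsum (m : nat) (f : nat -> R) : R :=
  match m with O => 0 | S k => rsum k f + f k end.
Fixpoint vsum (m : nat) (f : nat -> vec3) : vec3 :=
  match m with O => vzero | S k => vadd (vsum k f) (f k) end.

Definition conv_hull (l : list vec3) (v : vec3) : Prop :=
  exists c : nat -> R,
    (forall k, (k < length l)%nat -> 0 <= c k) /\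
    rsum (length l) c = 1 /\
    v = vsum (length l) (fun k => vscale (c k) (nth k l vzero)).

Definition extreme_point (S : vec3 -> Prop) (e : vec3) : Prop :=
  S e /\
  forall a b t, S a -> S b -> 0 < t < 1 ->
    e = vadd (vscale t a) (vscale (1 - t) b) -> a = e /\ b = e.

Definition r_n (n : nat) : R := sqrt (/ cos (PI / INR n)).

Definition omega (n i : nat) : vec3 :=
  mkV (r_n n * cos (2 * PI * INR i / INR n))
      (r_n n * sin (2 * PI * INR i / INR n)) 1.

Definition unit_eff : vec3 := mkV 0 0 1.

Definition eff (n i : nat) : vec3 :=
  if Nat.even n then
    vscale (1/2) (mkV (r_n n * cos ((2 * INR i - 1) * PI / INR n))
                      (r_n n * sin ((2 * INR i - 1) * PI / INR n)) 1)
  else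
    vscale (/ (1 + r_n n ^ 2))
      (mkV (r_n n * cos (2 * PI * INR i / INR n))
           (r_n n * sin (2 * PI * INR i / INR n)) 1).

Definition eff_bar (n i : nat) : vec3 := vsub unit_eff (eff n i).

Definition effect_gens (n : nat) : list vec3 :=
  vzero :: unit_eff :: map (eff n) (seq 0 n) ++ map (eff_bar n) (seq 0 n).

Definition effect_set (n : nat) (e : vec3) : Prop := conv_hull (effect_gens n) e.

Definition prob (e w : vec3) : R := dot e w.

(* total error of measurement {e, u - e} guessing w1 on e, w2 on u - e,
   uniform prior: p_E = (p(e|w2) + p(u-e|w1)) / 2 *)
Definition p_err (w1 w2 e : vec3) : R :=
  / 2 * (prob e w2 + prob (vsub unit_eff e) w1).

Definition min_error (n : nat) (w1 w2 e : vec3) : Prop :=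
  effect_set n e /\
  forall e', effect_set n e' -> p_err w1 w2 e <= p_err w1 w2 e'.

Definition info_symmetry (n : nat) : Prop :=
  forall i j, (i < n)%nat -> (j < n)%nat -> i <> j ->
    exists e, min_error n (omega n i) (omega n j) e /\
              extreme_point (effect_set n) e /\
              prob e (omega n j) = prob (vsub unit_eff e) (omega n i).

From Stdlib Require Import Reals Lra Lia List.
Open Scope R_scope.

(* For a pair of states (w1, w2) the total error of {e, u - e} equals
   (u.w1 - (w1 - w2).e) / 2, so minimum-error effects are exactly the
   maximizers of the linear functional d = w1 - w2 on the effect set.  The
   effect set is the convex hull of finitely many generators; when d is
   maximized over the generators only at two of them, A and B, every
   extremal maximizer of d over the hull is A or B (face lemma).  Hence
   Information Symmetry fails as soon as, for some pair of pure states,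
   neither A nor B gives equal error probabilities.

   Writing all states and effects in cylindrical coordinates, the
   value of d on a generator is a positive multiple of such a cosine, so the
   estimate identifies the maximizing generators by integer arithmetic.  For
   n = 2m+1 we use the pair (omega_(2m), omega_(m+1)), whose optimal
   effects are e_0 and bar e_m; for n = 2h the pair (omega_(h-1), omega_1),
   whose optimal effects are bar e_0 and bar e_1.  In both cases one of the
   two error probabilities of each optimal effect vanishes while the other
   is strictly positive. *)

Lemma rsum_nonneg (m : nat) (f : nat -> R) :
  (forall k, (k < m)%nat -> 0 <= f k) -> 0 <= rsum m f.
Proof.
  induction m as [|m IH]; simpl; intros Hf; [lra|].
  pose proof (IH (fun k Hk => Hf k (Nat.lt_lt_succ_r _ _ Hk))).
  pose proof (Hf m (Nat.lt_succ_diag_r m)). lra.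
Qed.

Lemma rsum_nonpos_terms (m : nat) (f : nat -> R) :
  (forall k, (k < m)%nat -> 0 <= f k) -> rsum m f <= 0 ->
  forall k, (k < m)%nat -> f k = 0.
Proof.
  induction m as [|m IH]; simpl; intros Hf Hs k Hk; [lia|].
  assert (Hf' : forall k, (k < m)%nat -> 0 <= f k) by (intros; apply Hf; lia).
  pose proof (rsum_nonneg m f Hf'). pose proof (Hf m (Nat.lt_succ_diag_r m)).
  destruct (Nat.eq_dec k m) as [->|Hkm]; [lra|].
  apply IH; [exact Hf' | lra | lia].
Qed.

(* Linearity of [rsum], in the form needed for the slack of a bound [M]. *)
Lemma rsum_affine (m : nat) (c x : nat -> R) (M : R) :
  rsum m (fun k => c k * (M - x k)) = M * rsum m c - rsum m (fun k => c k * x k).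
Proof. induction m as [|m IH]; simpl; [ring | rewrite IH; ring]. Qed.

Lemma dot_combination (d : vec3) (m : nat) (c : nat -> R) (g : nat -> vec3) :
  dot d (vsum m (fun k => vscale (c k) (g k))) = rsum m (fun k => c k * dot d (g k)).
Proof.
  induction m as [|m IH]; simpl.
  - unfold dot; simpl; ring.
  - rewrite <- IH. unfold dot, vadd, vscale; simpl; ring.
Qed.

Lemma vec_eq (a b : vec3) : vx a = vx b -> vy a = vy b -> vz a = vz b -> a = b.
Proof. destruct a, b; simpl; intros; subst; reflexivity. Qed.

Lemma indicator_sums (L : list vec3) (p m : nat) :
  let c := fun k => if Nat.eq_dec k p then 1 else 0 in
  (rsum m c = if Nat.ltb p m then 1 else 0) /\
  vsum m (fun k => vscale (c k) (nth k L vzero)) =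
    if Nat.ltb p m then nth p L vzero else vzero.
Proof.
  intros c. induction m as [|m [IHr IHv]]; simpl; [auto|].
  rewrite IHr, IHv. unfold c.
  destruct (Nat.eq_dec m p) as [->|Hmp].
  - rewrite (proj2 (Nat.ltb_ge p p) (le_n p)), (proj2 (Nat.ltb_lt p (S p)) (Nat.lt_succ_diag_r p)).
    split; [lra | apply vec_eq; unfold vadd, vscale; simpl; ring].
  - replace (Nat.ltb p (S m)) with (Nat.ltb p m)
      by (destruct (Nat.ltb_spec p m), (Nat.ltb_spec p (S m)); auto; lia).
    split; [lra | destruct (Nat.ltb p m); apply vec_eq; unfold vadd, vscale; simpl; ring].
Qed.

Lemma conv_hull_In (L : list vec3) (g : vec3) : In g L -> conv_hull L g.
Proof.
  intros Hg. destruct (In_nth L g vzero Hg) as [p [Hp <-]].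
  destruct (indicator_sums L p (length L)) as [Hr Hv].
  rewrite (proj2 (Nat.ltb_lt _ _) Hp) in Hr, Hv.
  exists (fun k => if Nat.eq_dec k p then 1 else 0). repeat split; auto.
  intros k _. destruct (Nat.eq_dec k p); lra.
Qed.

Lemma weights_on_maximizers (m : nat) (c : nat -> R) (g : nat -> vec3) (d : vec3) (M : R) :
  (forall k, (k < m)%nat -> 0 <= c k) -> rsum m c = 1 ->
  (forall k, (k < m)%nat -> dot d (g k) <= M) ->
  M <= dot d (vsum m (fun k => vscale (c k) (g k))) ->
  forall k, (k < m)%nat -> c k = 0 \/ dot d (g k) = M.
Proof.
  intros Hc Hc1 Hg HM k Hk.
  rewrite dot_combination in HM.
  assert (Hslack : forall k, (k < m)%nat -> 0 <= c k * (M - dot d (g k)))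
    by (intros j Hj; apply Rmult_le_pos; [exact (Hc j Hj) | pose proof (Hg j Hj); lra]).
  assert (Htotal : rsum m (fun k => c k * (M - dot d (g k))) <= 0)
    by (rewrite rsum_affine, Hc1; lra).
  destruct (Rmult_integral _ _ (rsum_nonpos_terms _ _ Hslack Htotal k Hk));
    [left | right]; lra.
Qed.

Lemma combination_of_two_points (m : nat) (c : nat -> R) (g : nat -> vec3) (A B : vec3) :
  (forall k, (k < m)%nat -> 0 <= c k) ->
  (forall k, (k < m)%nat -> c k = 0 \/ g k = A \/ g k = B) ->
  exists a b, 0 <= a /\ 0 <= b /\ a + b = rsum m c /\
    vsum m (fun k => vscale (c k) (g k)) = vadd (vscale a A) (vscale b B).
Proof.
  induction m as [|m IH]; simpl; intros Hc Hg.
  - exists 0, 0. repeat split; try lra. apply vec_eq; unfold vadd, vscale; simpl; ring.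
  - destruct IH as [a [b [Ha [Hb [Hab ->]]]]]; [intros; apply Hc; lia | intros; apply Hg; lia |].
    pose proof (Hc m (Nat.lt_succ_diag_r m)) as Hcm.
    destruct (Hg m (Nat.lt_succ_diag_r m)) as [E|[E|E]]; rewrite E.
    + exists a, b. repeat split; try lra. apply vec_eq; unfold vadd, vscale; simpl; ring.
    + exists (a + c m), b. repeat split; try lra. apply vec_eq; unfold vadd, vscale; simpl; ring.
    + exists a, (b + c m). repeat split; try lra. apply vec_eq; unfold vadd, vscale; simpl; ring.
Qed.

Definition max_only_at (L : list vec3) (d A B : vec3) : Prop :=
  forall g, In g L -> dot d g <= dot d A /\ (dot d g = dot d A -> g = A \/ g = B).

Lemma extreme_maximizer (L : list vec3) (d A B e : vec3) :
  A <> B -> In A L -> In B L -> max_only_at L d A B ->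
  extreme_point (conv_hull L) e -> dot d A <= dot d e -> e = A \/ e = B.
Proof.
  intros HAB HA HB Hmax [[c [Hc [Hc1 He]]] Hext] HM.
  assert (Hin : forall k, (k < length L)%nat -> In (nth k L vzero) L) by (intros; apply nth_In; auto).
  assert (Hsupp : forall k, (k < length L)%nat ->
            c k = 0 \/ nth k L vzero = A \/ nth k L vzero = B).
  { intros k Hk.
    destruct (weights_on_maximizers (length L) c (fun k => nth k L vzero) d (dot d A)
                Hc Hc1 (fun k Hk => proj1 (Hmax _ (Hin k Hk))) ltac:(rewrite He in HM; exact HM) k Hk)
      as [H0|Heq]; auto.
    right. exact (proj2 (Hmax _ (Hin k Hk)) Heq). }
  destruct (combination_of_two_points _ _ _ A B Hc Hsupp) as [a [b [Ha [Hb [Hab Hcomb]]]]].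
  rewrite Hc1 in Hab. rewrite Hcomb in He.
  destruct (Req_dec b 0) as [Hb0|Hb0].
  { left. rewrite He. apply vec_eq; unfold vadd, vscale; simpl; subst b;
    replace a with 1 by lra; ring. }
  destruct (Req_dec b 1) as [Hb1|Hb1].
  { right. rewrite He. apply vec_eq; unfold vadd, vscale; simpl; subst b;
    replace a with 0 by lra; ring. }
  exfalso. apply HAB.
  destruct (Hext B A b (conv_hull_In L B HB) (conv_hull_In L A HA) ltac:(lra))
    as [EB EA]; [rewrite He; apply vec_eq; unfold vadd, vscale; simpl;
                 replace a with (1 - b) by lra; ring |].
  congruence.
Qed.

Lemma p_err_dot (w1 w2 e : vec3) :
  p_err w1 w2 e = / 2 * (dot unit_eff w1 - dot (vsub w1 w2) e).
Proof. unfold p_err, prob, dot, vsub, unit_eff; simpl; ring. Qed.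

Lemma min_error_maximizes (n : nat) (w1 w2 e g : vec3) :
  min_error n w1 w2 e -> effect_set n g -> dot (vsub w1 w2) g <= dot (vsub w1 w2) e.
Proof.
  intros [_ Hmin] Hg. specialize (Hmin g Hg). rewrite !p_err_dot in Hmin. lra.
Qed.

Lemma in_effect_gens (n : nat) (g : vec3) : In g (effect_gens n) ->
  g = vzero \/ g = unit_eff \/
  (exists k, (k < n)%nat /\ g = eff n k) \/ (exists k, (k < n)%nat /\ g = eff_bar n k).
Proof.
  unfold effect_gens. simpl. intros [H|[H|H]]; auto.
  apply in_app_iff in H.
  destruct H as [H|H]; apply in_map_iff in H; destruct H as [k [Hk Hin]];
    apply in_seq in Hin; right; right; [left|right]; exists k; split; auto; lia.
Qed.

Lemma eff_in_gens (n k : nat) : (k < n)%nat -> In (eff n k) (effect_gens n).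
Proof. intros. right; right. apply in_app_iff; left. apply in_map, in_seq; lia. Qed.

Lemma eff_bar_in_gens (n k : nat) : (k < n)%nat -> In (eff_bar n k) (effect_gens n).
Proof. intros. right; right. apply in_app_iff; right. apply in_map, in_seq; lia. Qed.

Lemma not_info_symmetry_of_face (n i j : nat) (A B : vec3) :
  (i < n)%nat -> (j < n)%nat -> i <> j -> A <> B ->
  In A (effect_gens n) -> In B (effect_gens n) ->
  max_only_at (effect_gens n) (vsub (omega n i) (omega n j)) A B ->
  prob A (omega n j) <> prob (vsub unit_eff A) (omega n i) ->
  prob B (omega n j) <> prob (vsub unit_eff B) (omega n i) ->
  ~ info_symmetry n.
Proof.
  intros Hi Hj Hij HAB HA HB Hmax HasymA HasymB IS.
  destruct (IS i j Hi Hj Hij) as [e [Hmin [Hext Hsym]]].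
  pose proof (min_error_maximizes n _ _ e A Hmin (conv_hull_In _ _ HA)) as HM.
  destruct (extreme_maximizer _ _ A B e HAB HA HB Hmax Hext HM) as [->| ->]; auto.
Qed.

Lemma cos_odd_multiple_reduce (N p : nat) : (1 <= N)%nat -> Nat.Odd p ->
  exists q a, (1 <= q <= N)%nat /\ (p = 2 * N * a + q \/ p + q = 2 * N * (a + 1))%nat /\
    cos (INR p * PI / INR N) = cos (INR q * PI / INR N).
Proof.
  intros HN [x Hx].
  assert (H2N : (2 * N <> 0)%nat) by lia.
  pose proof (Nat.div_mod p (2 * N) H2N) as Hdm.
  pose proof (Nat.mod_upper_bound p (2 * N) H2N) as Hub.
  set (a := (p / (2 * N))%nat) in *. set (b := (p mod (2 * N))%nat) in *.
  assert (HNR : INR N <> 0) by (apply not_0_INR; lia).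
  assert (Hb : cos (INR p * PI / INR N) = cos (INR b * PI / INR N)).
  { rewrite Hdm, plus_INR, !mult_INR, <- (cos_period (INR b * PI / INR N) a).
    f_equal. simpl. field. exact HNR. }
  assert (Hb1 : (1 <= b)%nat) by (destruct b; [|lia]; exfalso; lia).
  rewrite Hb. destruct (Nat.le_gt_cases b N).
  - exists b, a. repeat split; auto; lia.
  - exists (2 * N - b)%nat, a. split; [lia | split; [lia |]].
    rewrite minus_INR, mult_INR by lia.
    rewrite <- (cos_neg (INR b * PI / INR N)), <- (cos_period (- (INR b * PI / INR N)) 1).
    f_equal. simpl. field. exact HNR.
Qed.

Lemma cos_odd_multiple_max (N p : nat) : (1 <= N)%nat -> Nat.Odd p ->
  cos (INR p * PI / INR N) <= cos (PI / INR N) /\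
  (cos (INR p * PI / INR N) = cos (PI / INR N) ->
   exists a, (p = 2 * N * a + 1 \/ p = 2 * N * a + (2 * N - 1))%nat).
Proof.
  intros HN Hp.
  destruct (cos_odd_multiple_reduce N p HN Hp) as [q [a [Hq [Hpq ->]]]].
  destruct (Nat.eq_dec q 1) as [->|Hq1].
  - rewrite Rmult_1_l. split; [lra | intros _; exists a; lia].
  - assert (1 <= INR N) by (apply (le_INR 1); exact HN).
    assert (2 <= INR q) by (apply (le_INR 2); lia).
    assert (INR q <= INR N) by (apply le_INR; lia).
    pose proof PI_RGT_0.
    assert (Hlt : cos (INR q * PI / INR N) < cos (PI / INR N)).
    { apply cos_decreasing_1; unfold Rdiv.
      - apply Rmult_le_pos; [lra | left; apply Rinv_0_lt_compat; lra].
      - apply (Rmult_le_reg_r (INR N)); [lra|]. rewrite Rmult_assoc, Rinv_l by lra. nra.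
      - apply Rmult_le_pos; [nra | left; apply Rinv_0_lt_compat; lra].
      - apply (Rmult_le_reg_r (INR N)); [lra|]. rewrite Rmult_assoc, Rinv_l by lra. nra.
      - apply Rmult_lt_compat_r; [apply Rinv_0_lt_compat; lra | nra]. }
    split; [lra | intros E; lra].
Qed.

Lemma cos_reflect_period (x y : R) (k : nat) : y = - x + 2 * INR k * PI -> cos x = cos y.
Proof. intros ->. rewrite cos_period, cos_neg. reflexivity. Qed.

Definition polar (rho phi w : R) : vec3 := mkV (rho * cos phi) (rho * sin phi) w.

Lemma dot_polar (rho phi w sigma psi v : R) :
  dot (polar rho phi w) (polar sigma psi v) = rho * sigma * cos (phi - psi) + w * v.
Proof. unfold dot, polar; simpl. rewrite cos_minus. ring. Qed.

Lemma polar_complement (rho phi w : R) :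
  vsub unit_eff (polar rho phi w) = polar rho (phi + PI) (1 - w).
Proof.
  unfold polar, vsub, unit_eff. rewrite neg_cos, neg_sin.
  apply vec_eq; simpl; ring.
Qed.

Lemma polar_period (rho phi w : R) (k : nat) :
  polar rho (phi + 2 * INR k * PI) w = polar rho phi w.
Proof. unfold polar. rewrite cos_period, sin_period. reflexivity. Qed.

Lemma polar_chord (r a b w : R) :
  vsub (polar r a w) (polar r b w) =
  polar (2 * r * sin ((a - b) / 2)) ((a + b) / 2 + PI / 2) 0.
Proof.
  set (p := (a + b) / 2). set (q := (a - b) / 2).
  replace a with (p + q) by (unfold p, q; field).
  replace b with (p - q) by (unfold p, q; field).
  unfold polar, vsub. rewrite !cos_plus, !sin_plus, cos_minus, sin_minus, cos_PI2, sin_PI2.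
  apply vec_eq; simpl; ring.
Qed.

Lemma r_n_facts (n : nat) : (3 <= n)%nat ->
  0 < cos (PI / INR n) /\ 0 < r_n n /\ r_n n * r_n n * cos (PI / INR n) = 1.
Proof.
  intros Hn. assert (3 <= INR n) by (pose proof (le_INR 3 n Hn) as H3; simpl in H3; lra).
  pose proof PI_RGT_0.
  assert (Hc : 0 < cos (PI / INR n)).
  { assert (0 < PI / INR n) by (apply Rdiv_lt_0_compat; lra).
    apply cos_gt_0; [lra|].
    apply (Rmult_lt_reg_r (INR n)); [lra|]. unfold Rdiv. rewrite Rmult_assoc, Rinv_l by lra. nra. }
  unfold r_n. repeat split; auto.
  - apply sqrt_lt_R0, Rinv_0_lt_compat; exact Hc.
  - rewrite sqrt_sqrt by (left; apply Rinv_0_lt_compat; exact Hc). field. lra.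
Qed.

Lemma omega_polar (n i : nat) :
  omega n i = polar (r_n n) (2 * PI * INR i / INR n) 1.
Proof. reflexivity. Qed.

Lemma eff_polar_odd (n k : nat) : Nat.even n = false ->
  eff n k = polar (/ (1 + r_n n ^ 2) * r_n n) (2 * PI * INR k / INR n) (/ (1 + r_n n ^ 2)).
Proof.
  intros Hn. unfold eff. rewrite Hn. unfold polar, vscale. apply vec_eq; simpl; ring.
Qed.

Lemma eff_polar_even (n k : nat) : Nat.even n = true ->
  eff n k = polar (r_n n / 2) ((2 * INR k - 1) * PI / INR n) (1 / 2).
Proof.
  intros Hn. unfold eff. rewrite Hn. unfold polar, vscale. apply vec_eq; simpl; field.
Qed.

Lemma polar_dot_bound (lam alpha rho phi w : R) (N p : nat) :
  0 < lam -> 0 < rho -> (1 <= N)%nat -> Nat.Odd p ->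
  cos (alpha - phi) = cos (INR p * PI / INR N) ->
  dot (polar lam alpha 0) (polar rho phi w) <= lam * rho * cos (PI / INR N) /\
  (dot (polar lam alpha 0) (polar rho phi w) = lam * rho * cos (PI / INR N) ->
   exists a, (p = 2 * N * a + 1 \/ p = 2 * N * a + (2 * N - 1))%nat).
Proof.
  intros Hlam Hrho HN Hp Hcos.
  rewrite dot_polar, Hcos, Rmult_0_l, Rplus_0_r.
  destruct (cos_odd_multiple_max N p HN Hp) as [Hle Heq].
  assert (Hpos : 0 < lam * rho) by (apply Rmult_lt_0_compat; assumption).
  split.
  - apply Rmult_le_compat_l; lra.
  - intros E. apply Heq. apply (Rmult_eq_reg_l (lam * rho)); lra.
Qed.

Lemma dot_horizontal_vzero (lam alpha : R) : dot (polar lam alpha 0) vzero = 0.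
Proof. unfold dot, polar, vzero; simpl; ring. Qed.

Lemma dot_horizontal_unit (lam alpha : R) : dot (polar lam alpha 0) unit_eff = 0.
Proof. unfold dot, polar, unit_eff; simpl; ring. Qed.

(* Odd polygons n = 2m+1: the pair omega_(2m), omega_(m+1). *)
Section OddPolygon.

Variable m : nat.
Hypothesis Hm : (2 <= m)%nat.

Let n := (2 * m + 1)%nat.
Let N := (2 * n)%nat.
Let r := r_n n.
Let z := / (1 + r ^ 2).
Let ang (k : nat) := 2 * PI * INR k / INR n.
Let lam := 2 * r * sin (PI * (INR m - 1) / INR n).

Lemma odd_INR : INR n = 2 * INR m + 1 /\ INR N = 2 * INR n /\ 2 <= INR m.
Proof.
  assert (H2 : INR 2 = 2) by (simpl; ring).
  pose proof (le_INR 2 m Hm) as Hm2.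
  unfold N, n. rewrite !mult_INR, plus_INR, mult_INR, INR_1, H2. repeat split; lra.
Qed.

Lemma odd_model_facts : 0 < r /\ r * r * cos (PI / INR n) = 1 /\ 0 < z /\ 1 - z = z * (r * r).
Proof.
  destruct (r_n_facts n ltac:(unfold n; lia)) as [_ [Hr Hrr]]. fold r in Hr, Hrr.
  assert (0 < 1 + r ^ 2) by nra.
  split; [exact Hr | split; [exact Hrr | split]].
  - apply Rinv_0_lt_compat; assumption.
  - unfold z. field. lra.
Qed.

Lemma odd_eff (k : nat) : eff n k = polar (z * r) (ang k) z.
Proof. apply eff_polar_odd. unfold n. apply Nat.even_odd. Qed.

Lemma odd_eff_bar (k : nat) : eff_bar n k = polar (z * r) (ang k + PI) (1 - z).
Proof. unfold eff_bar. rewrite odd_eff. apply polar_complement. Qed.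

Lemma odd_direction :
  vsub (omega n (2 * m)) (omega n (m + 1)) = polar lam (- (PI / INR N)) 0.
Proof.
  destruct odd_INR as [Hn [HN Hm2]].
  rewrite !omega_polar, polar_chord, <- (polar_period _ (- (PI / INR N)) _ 1).
  unfold lam. rewrite HN, mult_INR, plus_INR, Hn. simpl.
  f_equal; [f_equal; f_equal | ]; field; lra.
Qed.

Lemma odd_lam_pos : 0 < lam.
Proof.
  destruct odd_INR as [Hn [_ Hm2]]. destruct odd_model_facts as [Hr _].
  pose proof PI_RGT_0.
  unfold lam. apply Rmult_lt_0_compat; [lra|].
  apply sin_gt_0; rewrite Hn.
  - apply Rdiv_lt_0_compat; nra.
  - apply (Rmult_lt_reg_r (2 * INR m + 1)); [lra|].
    unfold Rdiv. rewrite Rmult_assoc, Rinv_l by lra. nra.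
Qed.

Lemma odd_max_only_at :
  max_only_at (effect_gens n) (vsub (omega n (2 * m)) (omega n (m + 1)))
    (eff n 0) (eff_bar n m).
Proof.
  destruct odd_INR as [Hn [HN Hm2]]. destruct odd_model_facts as [Hr [_ [Hz _]]].
  pose proof odd_lam_pos as Hlam.
  assert (Hzr : 0 < z * r) by (apply Rmult_lt_0_compat; assumption).
  assert (HN1 : (1 <= N)%nat) by (unfold N, n; lia).
  rewrite odd_direction. intros g Hg.
  assert (HA : dot (polar lam (- (PI / INR N)) 0) (eff n 0) = lam * (z * r) * cos (PI / INR N)).
  { rewrite odd_eff, dot_polar. unfold ang. simpl.
    replace (- (PI / INR N) - 2 * PI * 0 / INR n) with (- (PI / INR N)) by (field; lra).
    rewrite cos_neg. ring. }
  assert (HM : 0 < lam * (z * r) * cos (PI / INR N)).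
  { apply Rmult_lt_0_compat; [apply Rmult_lt_0_compat; assumption|].
    pose proof PI_RGT_0. apply cos_gt_0.
    - assert (0 < PI / INR N) by (apply Rdiv_lt_0_compat; lra). lra.
    - apply (Rmult_lt_reg_r (INR N)); [lra|].
      unfold Rdiv. rewrite Rmult_assoc, Rinv_l by lra. nra. }
  rewrite HA.
  destruct (in_effect_gens n g Hg) as [->|[->|[[k [Hk ->]]|[k [Hk ->]]]]].
  - rewrite dot_horizontal_vzero. split; intros; lra.
  - rewrite dot_horizontal_unit. split; intros; lra.
  - rewrite odd_eff.
    destruct (polar_dot_bound lam (- (PI / INR N)) (z * r) (ang k) z N (4 * k + 1)
                Hlam Hzr HN1 ltac:(exists (2 * k)%nat; lia)) as [Hle Heq].
    { apply (cos_reflect_period _ _ 0). unfold ang. rewrite plus_INR, mult_INR, HN. simpl.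
      field. lra. }
    split; [exact Hle|]. intros E. destruct (Heq E) as [a Ha].
    assert (k = 0)%nat by (unfold N, n in *; destruct Ha, a; nia). subst k. left; symmetry; apply odd_eff.
  - rewrite odd_eff_bar.
    destruct (polar_dot_bound lam (- (PI / INR N)) (z * r) (ang k + PI) (1 - z) N
                (4 * k + 2 * n + 1) Hlam Hzr HN1 ltac:(exists (2 * k + n)%nat; lia)) as [Hle Heq].
    { apply (cos_reflect_period _ _ 0). unfold ang. rewrite !plus_INR, !mult_INR, HN. simpl.
      field. lra. }
    split; [exact Hle|]. intros E. destruct (Heq E) as [a Ha].
    assert (k = m) by (unfold N, n in *; destruct Ha, a; nia). subst k. right; symmetry; apply odd_eff_bar.
Qed.

Lemma odd_error_gap : 0 < z * (r * r) * (1 - cos (2 * (PI / INR n))).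
Proof.
  destruct odd_INR as [Hn [_ Hm2]]. destruct odd_model_facts as [Hr [_ [Hz _]]].
  pose proof PI_RGT_0.
  assert (Ht : 0 < PI / INR n) by (apply Rdiv_lt_0_compat; lra).
  assert (Hc : cos (2 * (PI / INR n)) < 1).
  { rewrite <- cos_0. apply cos_decreasing_1; try lra.
    apply (Rmult_le_reg_r (INR n)); [lra|].
    unfold Rdiv. rewrite Rmult_assoc, (Rmult_assoc PI), Rinv_l by lra. nra. }
  apply Rmult_lt_0_compat; [apply Rmult_lt_0_compat; [exact Hz | nra] | lra].
Qed.

Lemma odd_errors_e0 :
  prob (eff n 0) (omega n (m + 1)) = 0 /\
  prob (vsub unit_eff (eff n 0)) (omega n (2 * m)) = z * (r * r) * (1 - cos (2 * (PI / INR n))).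
Proof.
  destruct odd_INR as [Hn [_ Hm2]]. destruct odd_model_facts as [_ [Hrr [_ Hz1]]].
  unfold prob. rewrite odd_eff, polar_complement, !omega_polar, !dot_polar. fold r.
  unfold ang. rewrite !mult_INR, plus_INR. simpl. split.
  - replace (2 * PI * 0 / INR n - 2 * PI * (INR m + 1) / INR n) with (- (PI / INR n + PI))
      by (rewrite Hn; field; lra).
    rewrite cos_neg, neg_cos. nra.
  - replace (2 * PI * 0 / INR n + PI - 2 * PI * ((1 + 1) * INR m) / INR n)
      with (- (PI - 2 * (PI / INR n))) by (rewrite Hn; field; lra).
    rewrite cos_neg, Rtrigo_facts.cos_pi_minus. nra.
Qed.

Lemma odd_errors_ebar_m :
  prob (eff_bar n m) (omega n (m + 1)) = z * (r * r) * (1 - cos (2 * (PI / INR n))) /\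
  prob (vsub unit_eff (eff_bar n m)) (omega n (2 * m)) = 0.
Proof.
  destruct odd_INR as [Hn [_ Hm2]]. destruct odd_model_facts as [_ [Hrr [_ Hz1]]].
  unfold prob. rewrite odd_eff_bar, polar_complement, !omega_polar, !dot_polar. fold r.
  unfold ang. rewrite !mult_INR, plus_INR. simpl. split.
  - replace (2 * PI * INR m / INR n + PI - 2 * PI * (INR m + 1) / INR n)
      with (PI - 2 * (PI / INR n)) by (rewrite Hn; field; lra).
    rewrite Rtrigo_facts.cos_pi_minus. nra.
  - replace (2 * PI * INR m / INR n + PI + PI - 2 * PI * ((1 + 1) * INR m) / INR n)
      with (PI / INR n + PI) by (rewrite Hn; field; lra).
    rewrite neg_cos. nra.
Qed.

Lemma odd_not_info_symmetry : ~ info_symmetry n.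
Proof.
  pose proof odd_error_gap as Hgap.
  destruct odd_errors_e0 as [HA1 HA2]. destruct odd_errors_ebar_m as [HB1 HB2].
  apply (not_info_symmetry_of_face n (2 * m) (m + 1) (eff n 0) (eff_bar n m)).
  - unfold n; lia.
  - unfold n; lia.
  - lia.
  - intros E. rewrite E in HA1. lra.
  - apply eff_in_gens. unfold n; lia.
  - apply eff_bar_in_gens. unfold n; lia.
  - exact odd_max_only_at.
  - rewrite HA1, HA2. lra.
  - rewrite HB1, HB2. lra.
Qed.

End OddPolygon.

(* Even polygons n = 2h: the pair omega_(h-1), omega_1. *)
Section EvenPolygon.

Variable h : nat.
Hypothesis Hh : (3 <= h)%nat.

Let n := (2 * h)%nat.
Let r := r_n n.
Let ang (k : nat) := (2 * INR k - 1) * PI / INR n.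
Let lam := 2 * r * sin (PI * (INR h - 2) / INR n).

Lemma even_INR : INR n = 2 * INR h /\ 3 <= INR h.
Proof.
  assert (H3 : INR 3 = 3) by (simpl; ring).
  pose proof (le_INR 3 h Hh) as Hh3.
  unfold n. rewrite mult_INR. simpl (INR 2). split; lra.
Qed.

Lemma even_model_facts : 0 < r /\ r * r * cos (PI / INR n) = 1.
Proof.
  destruct (r_n_facts n ltac:(unfold n; lia)) as [_ [Hr Hrr]]. split; assumption.
Qed.

(* For even n the effects e_k sit halfway between consecutive states. *)
Lemma even_eff (k : nat) : eff n k = polar (r / 2) (ang k) (1 / 2).
Proof. apply eff_polar_even. unfold n. apply Nat.even_even. Qed.

Lemma even_eff_bar (k : nat) : eff_bar n k = polar (r / 2) (ang k + PI) (1 - 1 / 2).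
Proof. unfold eff_bar. rewrite even_eff. apply polar_complement. Qed.

Lemma even_eff_shift (k : nat) : eff n (h + k) = eff_bar n k.
Proof.
  destruct even_INR as [Hn Hh3].
  rewrite even_eff, even_eff_bar. unfold ang. rewrite plus_INR, Hn.
  f_equal; [field; lra | lra].
Qed.

Lemma even_direction : vsub (omega n (h - 1)) (omega n 1) = polar lam PI 0.
Proof.
  destruct even_INR as [Hn Hh3].
  rewrite !omega_polar, polar_chord. unfold lam.
  rewrite minus_INR by lia. rewrite Hn. simpl (INR 1).
  f_equal; [f_equal; f_equal |]; field; lra.
Qed.

Lemma even_lam_pos : 0 < lam.
Proof.
  destruct even_INR as [Hn Hh3]. destruct even_model_facts as [Hr _].
  pose proof PI_RGT_0.
  unfold lam. apply Rmult_lt_0_compat; [lra|].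
  apply sin_gt_0; rewrite Hn.
  - apply Rdiv_lt_0_compat; nra.
  - apply (Rmult_lt_reg_r (2 * INR h)); [lra|].
    unfold Rdiv. rewrite Rmult_assoc, Rinv_l by lra. nra.
Qed.

Lemma even_max_only_at :
  max_only_at (effect_gens n) (vsub (omega n (h - 1)) (omega n 1))
    (eff_bar n 0) (eff_bar n 1).
Proof.
  destruct even_INR as [Hn Hh3]. destruct (r_n_facts n ltac:(unfold n; lia)) as [Hcos [Hr _]].
  fold r in Hr. pose proof even_lam_pos as Hlam.
  assert (Hr2 : 0 < r / 2) by lra.
  assert (Hn1 : (1 <= n)%nat) by (unfold n; lia).
  rewrite even_direction. intros g Hg.
  assert (HA : dot (polar lam PI 0) (eff_bar n 0) = lam * (r / 2) * cos (PI / INR n)).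
  { rewrite even_eff_bar, dot_polar. unfold ang. simpl.
    replace (PI - ((2 * 0 - 1) * PI / INR n + PI)) with (PI / INR n) by (field; lra). ring. }
  assert (HM : 0 < lam * (r / 2) * cos (PI / INR n))
    by (apply Rmult_lt_0_compat; [apply Rmult_lt_0_compat|]; assumption).
  rewrite HA.
  destruct (in_effect_gens n g Hg) as [->|[->|[[k [Hk ->]]|[k [Hk ->]]]]].
  - rewrite dot_horizontal_vzero. split; intros; lra.
  - rewrite dot_horizontal_unit. split; intros; lra.
  - rewrite even_eff.
    destruct (polar_dot_bound lam PI (r / 2) (ang k) (1 / 2) n (2 * k + 2 * h - 1)
                Hlam Hr2 Hn1 ltac:(exists (k + h - 1)%nat; lia)) as [Hle Heq].
    { apply (cos_reflect_period _ _ 1). unfold ang.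
      rewrite minus_INR, plus_INR, !mult_INR, Hn by lia. simpl. field. lra. }
    split; [exact Hle|]. intros E. destruct (Heq E) as [a Ha].
    rewrite <- even_eff, <- !even_eff_shift.
    assert (k = h + 0 \/ k = h + 1)%nat as [-> | ->]
      by (unfold n in *; destruct Ha, a as [|[|a]]; nia); [left | right]; reflexivity.
  - rewrite even_eff_bar.
    destruct (polar_dot_bound lam PI (r / 2) (ang k + PI) (1 - 1 / 2) n (2 * k + 4 * h - 1)
                Hlam Hr2 Hn1 ltac:(exists (k + 2 * h - 1)%nat; lia)) as [Hle Heq].
    { apply (cos_reflect_period _ _ 1). unfold ang.
      rewrite minus_INR, plus_INR, !mult_INR, Hn by lia. simpl. field. lra. }
    split; [exact Hle|]. intros E. destruct (Heq E) as [a Ha].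
    rewrite <- even_eff_bar.
    assert (k = 0 \/ k = 1)%nat as [-> | ->]
      by (unfold n in *; destruct Ha, a as [|[|a]]; nia); [left | right]; reflexivity.
Qed.

Lemma even_error_gap : 0 < 1 / 2 - r * r / 2 * cos (3 * (PI / INR n)).
Proof.
  destruct even_INR as [Hn Hh3]. destruct even_model_facts as [Hr Hrr].
  pose proof PI_RGT_0.
  assert (Ht : 0 < PI / INR n) by (apply Rdiv_lt_0_compat; lra).
  assert (Ht3 : 3 * (PI / INR n) <= PI).
  { apply (Rmult_le_reg_r (INR n)); [lra|].
    unfold Rdiv. rewrite Rmult_assoc, (Rmult_assoc PI), Rinv_l by lra. nra. }
  assert (Hc : cos (3 * (PI / INR n)) < cos (PI / INR n))
    by (apply cos_decreasing_1; lra).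
  assert (0 < r * r) by nra. nra.
Qed.

Lemma even_errors_ebar0 :
  prob (eff_bar n 0) (omega n 1) = 1 / 2 - r * r / 2 * cos (3 * (PI / INR n)) /\
  prob (vsub unit_eff (eff_bar n 0)) (omega n (h - 1)) = 0.
Proof.
  destruct even_INR as [Hn Hh3]. destruct even_model_facts as [_ Hrr].
  unfold prob. rewrite even_eff_bar, polar_complement, !omega_polar, !dot_polar. fold r.
  unfold ang. rewrite minus_INR by lia. simpl (INR 0). simpl (INR 1). split.
  - replace ((2 * 0 - 1) * PI / INR n + PI - 2 * PI * 1 / INR n)
      with (PI - 3 * (PI / INR n)) by (rewrite Hn; field; lra).
    rewrite Rtrigo_facts.cos_pi_minus. field.
  - replace ((2 * 0 - 1) * PI / INR n + PI + PI - 2 * PI * (INR h - 1) / INR n)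
      with (PI / INR n + PI) by (rewrite Hn; field; lra).
    rewrite neg_cos. nra.
Qed.

Lemma even_errors_ebar1 :
  prob (eff_bar n 1) (omega n 1) = 0 /\
  prob (vsub unit_eff (eff_bar n 1)) (omega n (h - 1)) = 1 / 2 - r * r / 2 * cos (3 * (PI / INR n)).
Proof.
  destruct even_INR as [Hn Hh3]. destruct even_model_facts as [_ Hrr].
  unfold prob. rewrite even_eff_bar, polar_complement, !omega_polar, !dot_polar. fold r.
  unfold ang. rewrite minus_INR by lia. simpl (INR 1). split.
  - replace ((2 * 1 - 1) * PI / INR n + PI - 2 * PI * 1 / INR n)
      with (PI - PI / INR n) by (rewrite Hn; field; lra).
    rewrite Rtrigo_facts.cos_pi_minus. nra.
  - replace ((2 * 1 - 1) * PI / INR n + PI + PI - 2 * PI * (INR h - 1) / INR n)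
      with (3 * (PI / INR n) + PI) by (rewrite Hn; field; lra).
    rewrite neg_cos. field.
Qed.

Lemma even_not_info_symmetry : ~ info_symmetry n.
Proof.
  pose proof even_error_gap as Hgap.
  destruct even_errors_ebar0 as [HA1 HA2]. destruct even_errors_ebar1 as [HB1 HB2].
  apply (not_info_symmetry_of_face n (h - 1) 1 (eff_bar n 0) (eff_bar n 1)).
  - unfold n; lia.
  - unfold n; lia.
  - lia.
  - intros E. rewrite E in HA1. lra.
  - apply eff_bar_in_gens. unfold n; lia.
  - apply eff_bar_in_gens. unfold n; lia.
  - exact even_max_only_at.
  - rewrite HA1, HA2. lra.
  - rewrite HB1, HB2. lra.
Qed.

End EvenPolygon.

Theorem theorem1 (n : nat) :
  ((Nat.Odd n /\ (5 <= n)%nat) \/ (Nat.Even n /\ (6 <= n)%nat)) ->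
  ~ info_symmetry n.
Proof.
  intros [[[m ->] Hn] | [[h ->] Hn]].
  - apply odd_not_info_symmetry. lia.
  - apply even_not_info_symmetry. lia.
Qed.
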